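(* Let $w=(w_n)$ be any bounded sequence of positive real numbers. The unilateral weighted backward shift $B_w:\ell^\infty(\mathbb N)\to\ell^\infty(\mathbb N)$, $(B_wx)_n=w_n x_{n+1}$ ($n\in\mathbb N$), is not recurrent; and for a bounded sequence of positive reals $w=(w_n)_{n\in\mathbb Z}$, the bilateral weighted backward shift $B_w:\ell^\infty(\mathbb Z)\to\ell^\infty(\mathbb Z)$, $(B_wx)_n=w_n x_{n+1}$ ($n\in\mathbb Z$), is not recurrent.
   Context: $\ell^\infty(\mathbb N)$, $\ell^\infty(\mathbb Z)$ are the Banach spaces of bounded complex sequences with the supremum norm. An operator $T$ on a Banach space $X$ is recurrent if for every non-empty open $U\subset X$ there is a positive integer $k$ with $U\cap T^{-k}(U)\neq\emptyset$. *)

From Stdlib Require Import Reals ZArith.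
From Coquelicot Require Import Coquelicot.
Open Scope R_scope.

Definition linf_bounded {I : Type} (x : I -> C) : Prop :=
  exists M : R, forall n, Cmod (x n) <= M.

(* Open sup-norm ball: sup_n |x_n - y_n| < r, written out as
   "there is s < r bounding all |x_n - y_n|". *)
Definition linf_ball {I : Type} (x : I -> C) (r : R) (y : I -> C) : Prop :=
  exists s : R, s < r /\ forall n, Cmod (Cminus (x n) (y n)) <= s.

Definition linf_open {I : Type} (U : (I -> C) -> Prop) : Prop :=
  (forall x, U x -> linf_bounded x) /\
  forall x, U x -> exists r : R, 0 < r /\
    forall y, linf_bounded y -> linf_ball x r y -> U y.

Definition linf_recurrent {I : Type} (T : (I -> C) -> (I -> C)) : Prop :=
  forall U : (I -> C) -> Prop, linf_open U -> (exists x, U x) ->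
    exists k : nat, (1 <= k)%nat /\ exists x, U x /\ U (Nat.iter k T x).

Definition uni_bshift (w : nat -> R) (x : nat -> C) : nat -> C :=
  fun n => Cmult (RtoC (w n)) (x (S n)).

Definition bi_bshift (w : Z -> R) (x : Z -> C) : Z -> C :=
  fun n => Cmult (RtoC (w n)) (x (n + 1)%Z).

(* A weighted backward shift with positive weights moves every coordinate
   along without changing its sign: (B^k x)_i is a positive multiple of
   x_(i+k).  Take y with y_i = 1 and y_(i+k) = -1 for all k >= 1.  A
   sequence x in the ball of radius 1/2 around y has Re x_(i+k) < 0, so
   Re (B^k x)_i < 0 and B^k x lies outside that ball. *)

From Stdlib Require Import Reals ZArith Lia Lra.
From Coquelicot Require Import Coquelicot.
Open Scope R_scope.

Section Recurrence.

Context {I : Type}.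

Lemma linf_ball_refl (y : I -> C) (r : R) : 0 < r -> linf_ball y r y.
Proof.
  intros Hr. exists 0. split; [exact Hr |]. intros n.
  replace (Cminus (y n) (y n)) with (RtoC 0) by ring.
  rewrite Cmod_0. apply Rle_refl.
Qed.

Lemma linf_open_ball (y : I -> C) (r : R) :
  linf_open (fun x => linf_bounded x /\ linf_ball y r x).
Proof.
  split; [now intros x [Hx _] |].
  intros x [_ [s [Hs Hx]]]. exists (r - s). split; [lra |].
  intros z Hz [t [Ht Hxz]]. split; [exact Hz |].
  exists (s + t). split; [lra |]. intros n.
  replace (Cminus (y n) (z n))
    with (Cplus (Cminus (y n) (x n)) (Cminus (x n) (z n))) by ring.
  eapply Rle_trans; [apply Cmod_triangle |].
  specialize (Hx n). specialize (Hxz n). lra.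
Qed.

Lemma Re_lt_of_Cmod_lt (a : R) (z : C) (r : R) :
  Cmod (Cminus (RtoC a) z) < r -> a - r < fst z < a + r.
Proof.
  intros H. pose proof (re_le_Cmod (Cminus (RtoC a) z)) as Hre.
  simpl in Hre. apply Rabs_le_between in Hre. lra.
Qed.

Lemma not_linf_recurrent_of_sign_reversal
    (T : (I -> C) -> (I -> C)) (y : I -> C) :
  linf_bounded y ->
  (forall k x, (1 <= k)%nat -> exists i j c, 0 < c /\
      y i = RtoC 1 /\ y j = RtoC (-1) /\
      Nat.iter k T x i = Cmult (RtoC c) (x j)) ->
  ~ linf_recurrent T.
Proof.
  intros Hy Hsign Hrec.
  destruct (Hrec _ (linf_open_ball y (1/2)))
    as [k [Hk [x [[_ [s [Hs Hx]]] [_ [t [Ht HTx]]]]]]].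
  { exists y. split; [exact Hy | apply linf_ball_refl; lra]. }
  destruct (Hsign k x Hk) as [i [j [c [Hc [Hyi [Hyj HTij]]]]]].
  specialize (Hx j). specialize (HTx i).
  rewrite Hyj in Hx. rewrite Hyi, HTij in HTx.
  assert (Hxj := Re_lt_of_Cmod_lt (-1) (x j) (1/2) ltac:(lra)).
  assert (HTxi := Re_lt_of_Cmod_lt 1 (Cmult (RtoC c) (x j)) (1/2) ltac:(lra)).
  simpl in HTxi. rewrite Rmult_0_l, Rminus_0_r in HTxi.
  assert (c * fst (x j) < 0) by nra. lra.
Qed.

End Recurrence.

Section WeightedShift.

Context {I : Type} (s : I -> I) (w : I -> R).

Definition weighted_shift (x : I -> C) : I -> C :=
  fun n => Cmult (RtoC (w n)) (x (s n)).

Hypothesis w_pos : forall n, 0 < w n.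

Lemma iter_weighted_shift (k : nat) (x : I -> C) (n : I) :
  exists c, 0 < c /\
    Nat.iter k weighted_shift x n = Cmult (RtoC c) (x (Nat.iter k s n)).
Proof.
  revert n. induction k as [| k IH]; intros n.
  - exists 1. split; [lra | simpl; ring].
  - destruct (IH (s n)) as [c [Hc E]]. exists (w n * c). split.
    + now apply Rmult_lt_0_compat.
    + rewrite Nat.iter_succ_r with (f := s).
      simpl. unfold weighted_shift at 1. rewrite E, RtoC_mult. ring.
Qed.

Theorem weighted_shift_not_recurrent
    (eq_dec : forall a b : I, {a = b} + {a <> b}) (i0 : I) :
  (forall k, (1 <= k)%nat -> Nat.iter k s i0 <> i0) ->
  ~ linf_recurrent weighted_shift.
Proof.
  intros Haperiodic.
  apply (not_linf_recurrent_of_sign_reversal _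
           (fun n => if eq_dec n i0 then RtoC 1 else RtoC (-1))).
  - exists 1. intros n.
    destruct (eq_dec n i0); rewrite Cmod_R; apply Rabs_le; lra.
  - intros k x Hk. destruct (iter_weighted_shift k x i0) as [c [Hc E]].
    exists i0, (Nat.iter k s i0), c.
    destruct (eq_dec i0 i0) as [_ | ]; [| congruence].
    destruct (eq_dec (Nat.iter k s i0) i0) as [Heq | _].
    + now apply (Haperiodic k Hk) in Heq.
    + easy.
Qed.

End WeightedShift.

Lemma iter_succ_nat (k : nat) : Nat.iter k S O = k.
Proof. induction k as [| k IH]; simpl; congruence. Qed.

Lemma iter_succ_Z (k : nat) : Nat.iter k (fun n => (n + 1)%Z) 0%Z = Z.of_nat k.
Proof. induction k as [| k IH]; simpl; [reflexivity | rewrite IH; lia]. Qed.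

Theorem theorem5p1 :
  (forall w : nat -> R,
     (forall n, 0 < w n) -> (exists M : R, forall n, w n <= M) ->
     ~ linf_recurrent (uni_bshift w)) /\
  (forall w : Z -> R,
     (forall n, 0 < w n) -> (exists M : R, forall n, w n <= M) ->
     ~ linf_recurrent (bi_bshift w)).
Proof.
  (* [uni_bshift w] and [bi_bshift w] are [weighted_shift] along the
     successor map up to conversion. *)
  split; intros w Hw _.
  - apply (weighted_shift_not_recurrent S w Hw Nat.eq_dec O).
    intros k Hk. rewrite iter_succ_nat. lia.
  - apply (weighted_shift_not_recurrent (fun n => (n + 1)%Z) w Hw Z.eq_dec 0%Z).
    intros k Hk. rewrite iter_succ_Z. lia.
Qed.
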